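(* Let $\mathbf w=(w_1,\dots,w_n)$ be weights with $w_i\ge0$, $\sum_iw_i=1$, and suppose $w_i=s_i/d$ with $s_i\in\mathbb Z_{\ge0}$ and $d\in\mathbb Z_{>0}$. Then for all $\mathbf r=(r_1,\dots,r_n)\in[0,1]^n$, $$\mu_{\mathbf w}(\mathbf r)=\operatorname{median}\big(\underbrace{r_1,\dots,r_1}_{s_1},\dots,\underbrace{r_n,\dots,r_n}_{s_n},0,\tfrac1d,\tfrac2d,\dots,1-\tfrac1d,1\big),$$ where $\mu_{\mathbf w}(\mathbf r):=\sup\{y\in[0,1]:\sum_{i:\,r_i\ge y}w_i\ge y\}$.
   Context: The median of an odd number $2d+1$ of real numbers (here $\sum_i s_i=d$ entries from $\mathbf r$ plus the $d+1$ grid points) is its $(d+1)$-th smallest element. *)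

From HB Require Import structures.
From mathcomp Require Import all_boot all_order all_algebra.
From mathcomp Require Import all_classical all_reals.
Set Implicit Arguments. Unset Strict Implicit. Unset Printing Implicit Defensive.
Import Order.TTheory GRing.Theory Num.Theory.
Local Open Scope ring_scope.
Local Open Scope classical_set_scope.

Definition mu_w (R : realType) (n : nat) (w r : 'I_n -> R) : R :=
  sup [set y : R | 0 <= y <= 1 /\ y <= \sum_(i < n | y <= r i) w i].

Definition median (R : realType) (l : seq R) : R :=
  nth 0 (sort <=%R l) (size l)./2.

Definition median_list (R : realType) (n : nat) (s : 'I_n -> nat) (d : nat)
  (r : 'I_n -> R) : seq R :=
  flatten [seq nseq (s i) (r i) | i <- enum 'I_n] ++
  [seq (k%:R / d%:R) | k <- iota 0 d.+1].

From HB Require Import structures.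
From mathcomp Require Import all_boot all_order all_algebra.
From mathcomp Require Import all_classical all_reals.
From mathcomp Require Import lra zify.
Set Implicit Arguments. Unset Strict Implicit.
Import Order.TTheory GRing.Theory Num.Theory.
Local Open Scope ring_scope.

(* The list L = median_list s d r has 2d+1 entries (the s_i sum
   to d), so its median m is its element of rank d: at least d+1 entries of L
   are >= m and at most d entries are > m.  Split each count into the part
   coming from the r_i (which, divided by d, is the weight W(>= m), resp.
   W(> m), of the coordinates r_i above m) and the part coming from the grid
   {k/d}, which is computed exactly: about (1 - m) d grid points lie above m.
   This yields  m <= W(>= m)  and  W(> m) <= m.  Finally, a general lemma
   characterises mu_w: any m in [0,1] with these two properties is the
   supremum defining mu_w w r, because m belongs to the set and every larger
   y has W(>= y) <= W(> m) <= m < y. *)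

Lemma nth_sort_rank (R : realDomainType) (L : seq R) (d : nat) :
  size L = (d + d).+1 ->
  (d.+1 <= count (fun x => (nth 0 (sort <=%R L) d <= x)%R) L)%N /\
  (count (fun x => (nth 0 (sort <=%R L) d < x)%R) L <= d)%N.
Proof.
move=> sL; set l := sort <=%R L; set m := nth 0 l d.
have pl : perm_eq l L by rewrite perm_sort.
have szl : size l = (d + d).+1 by rewrite (perm_size pl).
have srt : sorted <=%R l by apply: sort_sorted; exact: le_total.
have hom := sorted_leq_nth (@le_trans _ R) (@lexx _ R) 0 srt.
have ge_m : (d.+1 <= count (fun x => (m <= x)%R) l)%N.
  rewrite -(cat_take_drop d l) count_cat.
  have -> : count (fun x => m <= x) (drop d l) = size (drop d l).
    apply/eqP; rewrite -all_count; apply/(all_nthP 0) => i.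
    rewrite size_drop szl nth_drop => hi; apply: hom; rewrite ?inE ?szl //; lia.
  rewrite size_drop szl; lia.
have le_m : (d.+1 <= count (fun x => (x <= m)%R) l)%N.
  have sz_take : size (take d.+1 l) = d.+1 by rewrite size_takel // szl; lia.
  rewrite -(cat_take_drop d.+1 l) count_cat.
  have -> : count (fun x => x <= m) (take d.+1 l) = size (take d.+1 l).
    apply/eqP; rewrite -all_count; apply/(all_nthP 0) => i.
    rewrite sz_take => hi; rewrite nth_take //; apply: hom; rewrite ?inE ?szl //; lia.
  rewrite sz_take; lia.
have gt_m : count (fun x => m < x) l = (size l - count (fun x => (x <= m)%R) l)%N.
  rewrite -(count_predC (fun x => x <= m) l) addKn.
  by apply: eq_count => x; rewrite /= ltNge.
by move/permP: pl => pl; rewrite -!pl; split => //; rewrite gt_m szl; lia.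
Qed.

Lemma median_odd (R : realType) (L : seq R) (d : nat) :
  size L = (d + d).+1 -> median L = nth 0 (sort <=%R L) d.
Proof.
by move=> sL; rewrite /median sL addnn -[(d.*2).+1]/(true + d.*2)%N half_bit_double.
Qed.

Lemma iota0S (N : nat) : iota 0 N.+1 = iota 0 N ++ [:: N].
Proof. by rewrite -addn1 iotaD add0n. Qed.

Lemma grid_count_ge (R : realDomainType) (N : nat) (x : R) :
  0 <= x -> x <= N%:R ->
  (count (fun k : nat => x <= k%:R) (iota 0 N.+1))%:R + x <= N.+1%:R.
Proof.
elim: N x => [|N IH] x x0 xN.
  have -> : x = 0 by apply/le_anti; rewrite x0 xN.
  by rewrite /= lexx addr0.
rewrite iota0S count_cat; set c := count _ (iota 0 N.+1); rewrite /= addn0 natrD.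
have [xle|xgt] := leP x N%:R.
  have -> : x <= N.+1%:R by apply: (le_trans xle); rewrite ler_nat.
  have h := IH x x0 xle; rewrite -/c in h.
  by rewrite -!natr1 /= -?natr1 in h *; lra.
have -> : c = 0%N.
  rewrite /c (eq_in_count (a2 := pred0)) ?count_pred0 // => k.
  rewrite mem_iota add0n ltnS => kN; apply/negbTE; rewrite -ltNge.
  by apply: le_lt_trans xgt; rewrite ler_nat.
by rewrite add0r; move: xN; rewrite -!natr1 => h; rewrite h /=; lra.
Qed.

Lemma grid_count_gt (R : realDomainType) (N : nat) (x : R) :
  0 <= x -> x <= N%:R ->
  N%:R <= (count (fun k : nat => x < k%:R) (iota 0 N.+1))%:R + x.
Proof.
elim: N x => [|N IH] x x0 xN.
  by rewrite /= addn0; case: (_ < _); rewrite /=; lra.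
rewrite iota0S count_cat; set c := count _ (iota 0 N.+1); rewrite /= addn0 natrD.
have [xle|xgt] := leP x N%:R.
  have -> : x < N.+1%:R by apply: le_lt_trans xle _; rewrite ltr_nat.
  have h := IH x x0 xle; rewrite -/c in h.
  by rewrite -!natr1 /= in h *; lra.
have : 0 <= c%:R :> R by [].
by move: xN; rewrite -natr1 => h1 h2; case: (ltP x (N%:R + 1)) => h3; rewrite /=; lra.
Qed.

Section MedianList.
Variables (R : realType) (n : nat) (w : 'I_n -> R) (s : 'I_n -> nat) (d : nat).
Variable r : 'I_n -> R.
Hypothesis d_gt0 : (0 < d)%N.
Hypothesis w_s : forall i, w i = (s i)%:R / d%:R.

Let D_gt0 : 0 < d%:R :> R. Proof. by rewrite ltr0n. Qed.

Lemma count_replicated (P : pred R) :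
  (count P (flatten [seq nseq (s i) (r i) | i <- enum 'I_n]))%:R =
  d%:R * \sum_(i < n | P (r i)) w i.
Proof.
rewrite count_flatten sumnE !big_map natr_sum mulr_sumr [RHS]big_mkcond /=.
apply: eq_bigr => i _; rewrite count_nseq.
by case: (P (r i)); rewrite /= ?mul1n ?mul0n ?mulr0 // w_s mulrC divfK ?gt_eqF.
Qed.

Lemma count_median_list_ge (m : R) :
  (count (fun x => m <= x) (median_list s d r))%:R =
  d%:R * \sum_(i < n | m <= r i) w i +
  (count (fun k : nat => m * d%:R <= k%:R) (iota 0 d.+1))%:R.
Proof.
rewrite count_cat natrD count_replicated count_map; congr (_ + _%:R).
by apply: eq_count => k; rewrite /= ler_pdivlMr.
Qed.

Lemma count_median_list_gt (m : R) :
  (count (fun x => m < x) (median_list s d r))%:R =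
  d%:R * \sum_(i < n | m < r i) w i +
  (count (fun k : nat => m * d%:R < k%:R) (iota 0 d.+1))%:R.
Proof.
rewrite count_cat natrD count_replicated count_map; congr (_ + _%:R).
by apply: eq_count => k; rewrite /= ltr_pdivlMr.
Qed.

Hypothesis w_sum1 : \sum_(i < n) w i = 1.
Hypothesis r01 : forall i, 0 <= r i <= 1.

Lemma size_median_list : size (median_list s d r) = (d + d).+1.
Proof.
have size_flat : size (flatten [seq nseq (s i) (r i) | i <- enum 'I_n]) = d.
  apply/eqP; rewrite -(eqr_nat R) -count_predT count_replicated.
  by rewrite (eq_bigl xpredT) // w_sum1 mulr1.
by rewrite size_cat size_flat size_map size_iota addnS.
Qed.

Lemma median_list_01 x : x \in median_list s d r -> 0 <= x <= 1.
Proof.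
rewrite mem_cat => /orP [/flattenP [t /mapP [i _ ->]]|].
  by rewrite mem_nseq => /andP [_ /eqP ->].
move=> /mapP [k]; rewrite mem_iota add0n ltnS => /andP [_ kd] ->.
by rewrite divr_ge0 ?ler0n //= ler_pdivrMr // mul1r ler_nat.
Qed.

Lemma median_weight_bounds (m := median (median_list s d r)) :
  [/\ 0 <= m <= 1, m <= \sum_(i < n | m <= r i) w i
                 & \sum_(i < n | m < r i) w i <= m].
Proof.
have sL := size_median_list.
have mE : m = nth 0 (sort <=%R (median_list s d r)) d by rewrite /m (median_odd sL).
have m01 : 0 <= m <= 1.
  by apply: median_list_01; rewrite mE -(mem_sort <=%R) mem_nth // size_sort sL; lia.
have [ge_m gt_m] := nth_sort_rank sL; rewrite -mE in ge_m gt_m.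
move: ge_m gt_m; rewrite -(ler_nat R) -[(_ <= d)%N](ler_nat R).
rewrite count_median_list_ge count_median_list_gt.
have /andP [m0 m1] := m01.
have mD0 : 0 <= m * d%:R by rewrite mulr_ge0 // ltW.
have mDd : m * d%:R <= d%:R by rewrite -[X in _ <= X]mul1r ler_pM2r.
have := grid_count_ge mD0 mDd; have := grid_count_gt mD0 mDd.
move=> hgt hge Fge Ggt; split => //.
  by rewrite -(ler_pM2l D_gt0); move: Fge hge; rewrite -natr1; lra.
by rewrite -(ler_pM2l D_gt0); lra.
Qed.

End MedianList.

Lemma mu_w_characterization (R : realType) (n : nat) (w r : 'I_n -> R) (m : R) :
  (forall i, 0 <= w i) -> 0 <= m <= 1 ->
  m <= \sum_(i < n | m <= r i) w i -> \sum_(i < n | m < r i) w i <= m ->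
  mu_w w r = m.
Proof.
move=> w0 m01 m_ge m_gt; rewrite /mu_w; set A := (X in sup X).
have Am : A m by [].
have ub_m : ubound A m.
  move=> y [/andP [y0 y1] yW]; rewrite leNgt; apply/negP => my.
  suff : \sum_(i < n | y <= r i) w i <= \sum_(i < n | m < r i) w i by lra.
  rewrite [X in X <= _]big_mkcond [X in _ <= X]big_mkcond /=.
  apply: ler_sum => i _; case: ifP => yr; last by case: ifP.
  by rewrite (lt_le_trans my yr).
apply/le_anti/andP; split; first by apply: ge_sup => //; exists m.
by apply: sup_upper_bound => //; split; exists m.
Qed.

Theorem mainTheorem11 (R : realType) (n : nat) (w : 'I_n -> R)
  (s : 'I_n -> nat) (d : nat) (r : 'I_n -> R) :
  (0 < d)%N ->
  (forall i, 0 <= w i) ->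
  \sum_(i < n) w i = 1 ->
  (forall i, w i = (s i)%:R / d%:R) ->
  (forall i, 0 <= r i <= 1) ->
  mu_w w r = median (median_list s d r).
Proof.
move=> d_gt0 w0 w_sum1 w_s r01.
have [m01 m_ge m_gt] := median_weight_bounds d_gt0 w_s w_sum1 r01.
exact: mu_w_characterization.
Qed.
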